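(* Let $\varphi,\phi\in\mathbb{R}$ with $\varphi\neq 0$ and consider the two non-commuting reflection matrices in $\operatorname{SU}(1,1)$ $$M_A=\begin{pmatrix} i\cosh\varphi & e^{i\phi}\sinh\varphi\\ e^{-i\phi}\sinh\varphi & -i\cosh\varphi\end{pmatrix},\qquad M_B=\begin{pmatrix} i&0\\0&-i\end{pmatrix}.$$ Let $\Pi_n=M_1M_2\cdots M_n$ where each $M_j$ is drawn independently from $\{M_A,M_B\}$ with probabilities $p_A=p_B=1/2$, and write $\Pi_n=\begin{pmatrix}\alpha_n&\beta_n\\ \beta_n^*&\alpha_n^*\end{pmatrix}$. Define the (chiral) energy per unit cell $E(n)=\frac{\pi c}{12\,l}(|\alpha_n|^2+|\beta_n|^2)$. Then for even $n$, $\mathbb{E}(E(n+2))=\mathbb{E}(E(n))\cdot\cosh^2(\varphi)$, and $\mathbb{E}(E(n+1))=\mathbb{E}(E(n+2))$, so the ensemble-averaged energy grows exponentially with rate $\lambda_E:=\lim_{n\to\infty}\frac{1}{2n}\log\mathbb{E}(E(n))=\frac{1}{2}\log\cosh(\varphi)>0$.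
   Context: Randomly driven (1+1)d CFT with $\operatorname{SL}_2$ (single-wavelength) deformed Hamiltonians; each driving step acts on operators by a Möbius transformation given by an $\operatorname{SU}(1,1)$ matrix. A type I exceptional point is where both driving steps produce reflection (traceless) $\operatorname{SU}(1,1)$ matrices; after an $\operatorname{SU}(1,1)$ conjugation the two matrices can be brought to the form $M_A,M_B$ stated in the claim (a global conjugation does not affect the growth rate). Since $M_A^2=M_B^2=-\mathbb{I}$, for $n=2k$ any product containing $k-r+s$ factors $M_A$ and $k+s-r$ factors $M_B$ equals $(-1)^k\begin{pmatrix}\cosh((k-r-s)\varphi) & ie^{i\phi}\sinh((k-r-s)\varphi)\\ -ie^{-i\phi}\sinh((k-r-s)\varphi) & \cosh((k-r-s)\varphi)\end{pmatrix}$, occurring with total probability $p_{r,s}=2^{-n}\binom{k}{r}\binom{k}{s}$, giving $\mathbb{E}(E(n))=\frac{\pi c}{12 l}\sum_{r,s=0}^k p_{r,s}\cosh[2(k-r-s)\varphi]$. Here $c$ is the central charge and $l$ the deformation wavelength. *)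

From HB Require Import structures.
From mathcomp Require Import all_boot all_order all_algebra.
From mathcomp Require Import all_classical all_reals all_analysis.
From mathcomp Require Import complex.
Set Implicit Arguments. Unset Strict Implicit. Unset Printing Implicit Defensive.
Import Order.TTheory GRing.Theory Num.Theory.
Local Open Scope ring_scope.
Local Open Scope complex_scope.

Section Defs.
Variable R : realType.

Definition cosh (x : R) : R := (expR x + expR (- x)) / 2.
Definition sinh (x : R) : R := (expR x - expR (- x)) / 2.

Definition expi (t : R) : R[i] := cos t +i* sin t.

Definition mx2 (a b c d : R[i]) : 'M[R[i]]_2 :=
  \matrix_(i < 2, j < 2)
    if (i : nat) == 0%N then (if (j : nat) == 0%N then a else b)
    else (if (j : nat) == 0%N then c else d).

Definition MA (vphi phi : R) : 'M[R[i]]_2 :=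
  mx2 ('i * (cosh vphi)%:C) (expi phi * (sinh vphi)%:C)
      (expi (- phi) * (sinh vphi)%:C) (- 'i * (cosh vphi)%:C).

Definition MB : 'M[R[i]]_2 := mx2 'i 0 0 (- 'i).

(* Pi_n = M_1 M_2 ... M_n, where s k = true means M_{k+1} = M_A, false means M_B *)
Definition Pi (vphi phi : R) (n : nat) (s : {ffun 'I_n -> bool}) : 'M[R[i]]_2 :=
  \prod_(k < n) (if s k then MA vphi phi else MB).

(* E = pi c / (12 l) (|alpha|^2 + |beta|^2), alpha = Pi 0 0, beta = Pi 0 1 *)
Definition energy (c l : R) (M : 'M[R[i]]_2) : R :=
  pi * c / (12 * l) * (ComplexField.Normc.normc (M 0 0) ^+ 2 + ComplexField.Normc.normc (M 0 1) ^+ 2).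

Definition pA : R := 2^-1.
Definition pB : R := 2^-1.
Definition seq_prob (n : nat) (s : {ffun 'I_n -> bool}) : R :=
  \prod_(k < n) (if s k then pA else pB).

Definition meanE (vphi phi c l : R) (n : nat) : R :=
  \sum_(s : {ffun 'I_n -> bool}) seq_prob s * energy c l (Pi vphi phi s).

End Defs.

From HB Require Import structures.
From mathcomp Require Import all_boot all_order all_algebra.
From mathcomp Require Import all_classical all_reals all_analysis.
From mathcomp Require Import complex ring lra.
Set Implicit Arguments. Unset Strict Implicit. Unset Printing Implicit Defensive.
Import Order.TTheory GRing.Theory Num.Theory.
Import numFieldNormedType.Exports.
Local Open Scope classical_set_scope.
Local Open Scope ring_scope.

(* Since the first factor of Pi_(n+1) is independent of the others, the mean
   of Pi_n Pi_n^dagger obeys Q_(n+1) = T(Q_n) with the linear map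
   T(X) = (M_A X M_A^dagger + M_B X M_B^dagger) / 2.  A direct computation gives
   T(T(1)) = cosh^2 vphi * 1, so Q_(2k) = cosh^(2k) vphi * 1 and
   Q_(2k+1) = cosh^(2k) vphi * T(1), whose (0,0) entry is cosh^(2k+2) vphi.
   The energy is a fixed multiple of the (0,0) entry of Pi_n Pi_n^dagger, so the
   mean energy is K cosh^(n + (n mod 2)) vphi, from which the rate follows. *)

Section FfunCons.
Variables (T : finType) (n : nat).

Definition ffun_cons (x : T) (s : {ffun 'I_n -> T}) : {ffun 'I_n.+1 -> T} :=
  [ffun i => if unlift ord0 i is Some j then s j else x].

Lemma ffun_cons0 x s : ffun_cons x s ord0 = x.
Proof. by rewrite ffunE unlift_none. Qed.

Lemma ffun_cons_lift x s (j : 'I_n) : ffun_cons x s (lift ord0 j) = s j.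
Proof. by rewrite ffunE liftK. Qed.

Lemma big_ffun_cons (V : Type) (idx : V) (op : Monoid.com_law idx)
    (F : {ffun 'I_n.+1 -> T} -> V) :
  \big[op/idx]_(s : {ffun 'I_n.+1 -> T}) F s =
  \big[op/idx]_(x : T) \big[op/idx]_(s : {ffun 'I_n -> T}) F (ffun_cons x s).
Proof.
rewrite pair_big (reindex (fun p => ffun_cons p.1 p.2)) //=.
exists (fun s => (s ord0, [ffun j => s (lift ord0 j)])) => [[x s] _ | s _].
  by rewrite ffun_cons0; congr pair; apply/ffunP => j; rewrite ffunE ffun_cons_lift.
by apply/ffunP => i; rewrite ffunE; case: unliftP => [j ->|->]; rewrite ?ffunE.
Qed.

Lemma big_ord_ffun_cons (V : Type) (idx : V) (op : Monoid.law idx)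
    (G : T -> V) x s :
  \big[op/idx]_(k < n.+1) G (ffun_cons x s k) =
  op (G x) (\big[op/idx]_(k < n) G (s k)).
Proof.
by rewrite big_ord_recl ffun_cons0; under eq_bigr do rewrite ffun_cons_lift.
Qed.

End FfunCons.

Section Mx2.
Local Open Scope complex_scope.
Variable R : realType.
Implicit Types a b c d e f g h : R[i].

Definition adjmx m n (M : 'M[R[i]]_(m, n)) : 'M[R[i]]_(n, m) := (map_mx conjc M)^T.

Lemma adjmxM m n p (A : 'M[R[i]]_(m, n)) (B : 'M[R[i]]_(n, p)) :
  adjmx (A *m B) = adjmx B *m adjmx A.
Proof. by rewrite /adjmx map_mxM trmx_mul. Qed.

Lemma adjmx1 n : adjmx (1 : 'M[R[i]]_n) = 1.
Proof. by rewrite /adjmx map_mx1 trmx1. Qed.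

Lemma mulmx_adj00 (M : 'M[R[i]]_2) :
  (M *m adjmx M) 0 0 = M 0 0 * conjc (M 0 0) + M 0 1 * conjc (M 0 1).
Proof.
rewrite mxE !big_ord_recl big_ord0 !mxE addr0.
by have -> : lift ord0 ord0 = 1 :> 'I_2 by apply: val_inj.
Qed.

Lemma mul_mx2 a b c d e f g h :
  mx2 a b c d *m mx2 e f g h =
  mx2 (a * e + b * g) (a * f + b * h) (c * e + d * g) (c * f + d * h).
Proof.
apply/matrixP => i j; rewrite !mxE !big_ord_recl big_ord0 !mxE addr0.
by case: i => [[|[|i]] //]; case: j => [[|[|j]] //].
Qed.

Lemma add_mx2 a b c d e f g h :
  mx2 a b c d + mx2 e f g h = mx2 (a + e) (b + f) (c + g) (d + h).
Proof.
apply/matrixP => i j; rewrite !mxE.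
by case: i => [[|[|i]] //]; case: j => [[|[|j]] //].
Qed.

Lemma scale_mx2 k a b c d : k *: mx2 a b c d = mx2 (k * a) (k * b) (k * c) (k * d).
Proof.
apply/matrixP => i j; rewrite !mxE.
by case: i => [[|[|i]] //]; case: j => [[|[|j]] //].
Qed.

Lemma adjmx_mx2 a b c d :
  adjmx (mx2 a b c d) = mx2 (conjc a) (conjc c) (conjc b) (conjc d).
Proof.
apply/matrixP => i j; rewrite !mxE.
by case: i => [[|[|i]] //]; case: j => [[|[|j]] //].
Qed.

Lemma mx2_1 : 1 = mx2 1 0 0 1 :> 'M[R[i]]_2.
Proof.
apply/matrixP => i j; rewrite !mxE.
by case: i => [[|[|i]] //]; case: j => [[|[|j]] //].
Qed.

End Mx2.

Section Conjugation.
Local Open Scope complex_scope.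
Variable R : realType.

Lemma mulii : 'i%C * 'i%C = -1 :> R[i].
Proof. by rewrite -expr2 sqr_i. Qed.

Lemma conjc_i : conjc 'i%C = - 'i%C :> R[i].
Proof. by apply/eqP; rewrite eq_complex /= oppr0 !eqxx. Qed.

Lemma conjcM (a b : R[i]) : conjc (a * b) = conjc a * conjc b.
Proof. exact: rmorphM. Qed.

Lemma conjcN (a : R[i]) : conjc (- a) = - conjc a.
Proof. exact: rmorphN. Qed.

Lemma conjc_expi (t : R) : conjc (expi t) = expi (- t).
Proof. by rewrite /expi /conjc cosN sinN. Qed.

Lemma expi_mulN (t : R) : expi t * expi (- t) = 1.
Proof.
apply/eqP; rewrite eq_complex /= cosN sinN -(cos2Dsin2 t).
by apply/andP; split; apply/eqP; ring.
Qed.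

End Conjugation.

Section Hyperbolic.
Variable R : realType.
Implicit Types x : R.

Lemma cosh_sqr x : cosh x ^+ 2 = 1 + sinh x ^+ 2.
Proof.
have e : expR x * expR (- x) = 1 by rewrite -expRD subrr expR0.
rewrite /cosh /sinh.
have -> : ((expR x + expR (- x)) / 2) ^+ 2 =
          ((expR x - expR (- x)) / 2) ^+ 2 + expR x * expR (- x) by field.
by rewrite e addrC.
Qed.

Lemma cosh_gt0 x : 0 < cosh x.
Proof. by rewrite /cosh divr_gt0 ?addr_gt0 ?expR_gt0. Qed.

Lemma sinh_eq0 x : (sinh x == 0) = (x == 0).
Proof.
rewrite /sinh mulf_eq0 invr_eq0 pnatr_eq0 orbF subr_eq0.
apply/eqP/eqP => [/expR_inj | ->]; last by rewrite oppr0.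
by move/eqP; rewrite -subr_eq0 opprK -mulr2n mulrn_eq0 => /eqP.
Qed.

Lemma cosh_gt1 x : x != 0 -> 1 < cosh x.
Proof.
rewrite -sinh_eq0 => sh0.
have : 1 < cosh x ^+ 2 by rewrite cosh_sqr ltrDl exprn_even_gt0 //.
have := cosh_gt0 x; nra.
Qed.

End Hyperbolic.

Section SecondMoment.
Local Open Scope complex_scope.
Variables (R : realType) (vphi phi : R).

Local Notation ch := (cosh vphi)%:C.
Local Notation sh := (sinh vphi)%:C.

(* [MA] and [MB] are written with the [Num.imaginary] of [R[i]]; [complexiE]
   turns it into ['i%C], on which the complex lemmas act. *)
Lemma adjmx_MA : adjmx (MA vphi phi) =
  mx2 (- 'i%C * ch) (expi phi * sh) (expi (- phi) * sh) ('i%C * ch).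
Proof.
rewrite /MA -complexiE adjmx_mx2 !conjcM !conjc_expi conjcN conjc_i.
by rewrite !conjc_real !opprK.
Qed.

Lemma adjmx_MB : adjmx (MB R) = mx2 (- 'i%C) 0 0 'i%C.
Proof. by rewrite /MB -complexiE adjmx_mx2 conjcN conjc_i opprK conjc0. Qed.

Lemma coshC_sqr : ch * ch = 1 + sh * sh.
Proof. by rewrite -!rmorphM -!expr2 cosh_sqr rmorphD. Qed.

Definition drive (b : bool) : 'M[R[i]]_2 := if b then MA vphi phi else MB R.

Lemma Pi_cons n b (s : {ffun 'I_n -> bool}) :
  Pi vphi phi (ffun_cons b s) = drive b *m Pi vphi phi s.
Proof. by rewrite /Pi (big_ord_ffun_cons _ drive) mulmxE. Qed.

Lemma seq_prob_cons n b (s : {ffun 'I_n -> bool}) :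
  seq_prob R (ffun_cons b s) = 2^-1 * seq_prob R s.
Proof.
rewrite /seq_prob (big_ord_ffun_cons _ (fun b => if b then pA R else pB R)).
by case: b.
Qed.

Definition moment_map (X : 'M[R[i]]_2) : 'M[R[i]]_2 :=
  \sum_(b : bool) (2^-1 : R)%:C *: (drive b *m X *m adjmx (drive b)).

Definition second_moment n : 'M[R[i]]_2 :=
  \sum_(s : {ffun 'I_n -> bool})
    (seq_prob R s)%:C *: (Pi vphi phi s *m adjmx (Pi vphi phi s)).

Lemma second_moment0 : second_moment 0 = 1.
Proof.
rewrite /second_moment (big_pred1 [ffun i : 'I_0 => false]); last first.
  by move=> s /=; apply/esym/eqP/ffunP => -[].
by rewrite /seq_prob /Pi !big_ord0 rmorph1 scale1r mul1mx adjmx1.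
Qed.

Lemma second_momentS n : second_moment n.+1 = moment_map (second_moment n).
Proof.
rewrite /second_moment big_ffun_cons; apply: eq_bigr => b _.
rewrite mulmx_sumr mulmx_suml scaler_sumr; apply: eq_bigr => s _.
rewrite seq_prob_cons Pi_cons adjmxM rmorphM -scalerA -scalemxAr -scalemxAl.
by rewrite !mulmxA.
Qed.

Lemma moment_mapZ a X : moment_map (a *: X) = a *: moment_map X.
Proof.
rewrite /moment_map scaler_sumr; apply: eq_bigr => b _.
by rewrite -scalemxAr -scalemxAl !scalerA mulrC.
Qed.

Lemma moment_map_mx2 a b c d : moment_map (mx2 a b c d) =
  2^-1 *: (MA vphi phi *m mx2 a b c d *m adjmx (MA vphi phi) + mx2 a (- b) (- c) d).
Proof.
rewrite /moment_map big_bool /= adjmx_MB /MB -complexiE !mul_mx2.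
rewrite fmorphV rmorph_nat -scalerDr.
by congr (_ *: (_ + _)); congr mx2; ring: (mulii R).
Qed.

Lemma moment_map1 : moment_map 1 =
  mx2 (ch ^+ 2) ('i%C * expi phi * ch * sh)
      (- 'i%C * expi (- phi) * ch * sh) (ch ^+ 2).
Proof.
rewrite mx2_1 moment_map_mx2 adjmx_MA /MA -complexiE !mul_mx2 add_mx2 scale_mx2.
have e2 := expi_mulN phi.
by congr mx2; field: (mulii R) e2 coshC_sqr.
Qed.

Lemma moment_map_moment_map1 : moment_map (moment_map 1) = ch ^+ 2 *: 1.
Proof.
rewrite moment_map1 moment_map_mx2 adjmx_MA /MA -complexiE mx2_1.
rewrite !mul_mx2 add_mx2 !scale_mx2.
have e2 := expi_mulN phi.
by congr mx2; field: (mulii R) e2 coshC_sqr.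
Qed.

Lemma second_moment_double k : second_moment k.*2 = ch ^+ k.*2 *: 1.
Proof.
elim: k => [|k IH]; first by rewrite second_moment0 scale1r.
rewrite doubleS !second_momentS IH !moment_mapZ moment_map_moment_map1.
by rewrite scalerA -exprD addn2.
Qed.

Lemma second_moment_doubleS k : second_moment k.*2.+1 = ch ^+ k.*2 *: moment_map 1.
Proof. by rewrite second_momentS second_moment_double moment_mapZ. Qed.

Lemma second_moment00 n : second_moment n 0 0 = ch ^+ (n + odd n).
Proof.
rewrite -(odd_double_half n); case: (odd n) => /=; rewrite odd_double.
  by rewrite second_moment_doubleS moment_map1 !mxE -exprD addn1 addn2.
by rewrite second_moment_double !mxE mulr1 addn0.
Qed.

End SecondMoment.

Section MeanEnergy.
Local Open Scope complex_scope.
Variables (R : realType) (vphi phi c l : R).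

Lemma normc_sqr (z : R[i]) : (ComplexField.Normc.normc z ^+ 2)%:C = z * conjc z.
Proof.
case: z => a b; rewrite /ComplexField.Normc.normc sqr_sqrtr ?addr_ge0 ?sqr_ge0 //.
by apply/eqP; rewrite eq_complex /=; apply/andP; split; apply/eqP; ring.
Qed.

Lemma energyC (M : 'M[R[i]]_2) :
  (energy c l M)%:C = (pi * c / (12 * l))%:C * (M *m adjmx M) 0 0.
Proof. by rewrite /energy mulmx_adj00 -!normc_sqr -rmorphD -rmorphM. Qed.

Lemma meanE_second_moment n : (meanE vphi phi c l n)%:C =
  (pi * c / (12 * l))%:C * second_moment vphi phi n 0 0.
Proof.
rewrite /meanE /second_moment summxE mulr_sumr.
under [RHS]eq_bigr => s _ do rewrite mxE mulrCA -energyC -rmorphM.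
by rewrite -rmorph_sum.
Qed.

Lemma meanE_closed_form n :
  meanE vphi phi c l n = pi * c / (12 * l) * cosh vphi ^+ (n + odd n).
Proof.
by apply: complexI; rewrite meanE_second_moment second_moment00 -rmorphXn -rmorphM.
Qed.

End MeanEnergy.

Section GrowthRate.
Variable R : realType.

Lemma cvg_bounded_divn (b : nat -> R) (B : R) :
  (forall n, `|b n| <= B) -> (fun n => b n / n%:R) @ \oo --> 0.
Proof.
move=> bB.
have inv0 : (fun n : nat => B * n%:R^-1) @ \oo --> 0.
  rewrite -(mulr0 B); apply: cvgM; first exact: cvg_cst.
  apply/gtr0_cvgV0; last exact: cvgr_idn.
  by near=> n; rewrite ltr0n; near: n; exists 1%N.
have ninv0 : (fun n : nat => - (B * n%:R^-1)) @ \oo --> 0.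
  by rewrite -oppr0; exact: cvgN.
apply: (@squeeze_cvgr _ _ _ _ (fun n => - (B * n%:R^-1)) (fun n => B * n%:R^-1));
  [|exact: ninv0|exact: inv0].
near=> n; rewrite -ler_norml normrM normfV normr_nat ler_wpM2r ?invr_ge0.
Unshelve. all: by end_near.
Qed.

Lemma cvg_ln_rate (K a : R) : 0 < K -> 0 < a ->
  (fun n => ln (K * a ^+ (n + odd n)) / (2 * n%:R)) @ \oo --> ln a / 2.
Proof.
move=> K0 a0; set b := fun n : nat => (ln K + (odd n)%:R * ln a) / 2.
have bB n : `|b n| <= (`|ln K| + `|ln a|) / 2.
  rewrite /b normrM (ger0_norm (_ : 0 <= 2^-1)) ?invr_ge0 //.
  apply: ler_wpM2r; first by rewrite invr_ge0.
  rewrite (le_trans (ler_normD _ _)) // lerD2l normrM ger0_norm ?ler0n //.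
  by case: (odd n); rewrite ?mul1r ?mul0r ?normr0 ?normr_ge0.
have ln_split : \forall n \near \oo,
    ln a / 2 + b n / n%:R = ln (K * a ^+ (n + odd n)) / (2 * n%:R).
  near=> n; have n0 : n%:R != 0 :> R by rewrite pnatr_eq0 -lt0n; near: n; exists 1%N.
  rewrite lnM ?posrE ?exprn_gt0 // lnXn // -[ln a *+ _]mulr_natr natrD /b.
  by field; rewrite n0.
apply: cvg_trans (near_eq_cvg ln_split) _.
apply: cvg_trans (cvgD (cvg_cst _) (cvg_bounded_divn bB)) _.
by rewrite addr0.
Unshelve. all: by end_near.
Qed.

End GrowthRate.

Theorem mainTheorem2 (R : realType) (vphi phi c l : R)
  (hvphi : vphi != 0) (hc : 0 < c) (hl : 0 < l) :
  (forall n : nat, ~~ odd n ->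
     meanE vphi phi c l n.+2 = meanE vphi phi c l n * cosh vphi ^+ 2 /\
     meanE vphi phi c l n.+1 = meanE vphi phi c l n.+2) /\
  ((fun n : nat => ln (meanE vphi phi c l n) / (2 * n%:R))
     @ \oo --> ln (cosh vphi) / 2) /\
  0 < ln (cosh vphi) / 2.
Proof.
have K_gt0 : 0 < pi * c / (12 * l) by rewrite divr_gt0 ?mulr_gt0 ?pi_gt0.
split; [|split].
- move=> n /negbTE n_even.
  rewrite !meanE_closed_form !oddS negbK n_even !addn0 addn1.
  by rewrite -[RHS]mulrA -exprD addn2.
- under eq_cvg do rewrite meanE_closed_form.
  exact: cvg_ln_rate K_gt0 (cosh_gt0 vphi).
- by rewrite divr_gt0 ?ln_gt0 ?cosh_gt1.
Qed.
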